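(* The space $L(\omega_1)$ is a $P$-space that is not a Frolik space. In particular, there is a $P$-space that is not Frolik.
   Context: $L(\omega_1)$ is the set $\omega_1+1=\{\alpha:\alpha\le\omega_1\}$ with the topology in which every $\alpha<\omega_1$ is isolated and the sets $]\alpha,\omega_1]=\{\gamma:\alpha<\gamma\le\omega_1\}$, $\alpha<\omega_1$, form a local base at $\omega_1$. A $P$-space is a space in which every countable intersection of open sets is open. A space $X$ is Frolik if there is a sequence $\langle S_n:n<\omega\rangle$ of $\sigma$-compact spaces and a closed subset $F\subseteq\prod_{n<\omega}S_n$ such that $X$ is homeomorphic to $F$; $\sigma$-compact means a countable union of compact subspaces. *)

From HB Require Import structures.
From mathcomp Require Import all_boot all_order.
From mathcomp Require Import boolp classical_sets functions cardinality.
From mathcomp Require Import topology.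
Set Implicit Arguments. Unset Strict Implicit. Unset Printing Implicit Defensive.
Import Order.TTheory.
Local Open Scope classical_set_scope.
Local Open Scope order_scope.

Definition is_omega1 (d : Order.disp_t) (W : orderType d) : Prop :=
  [/\ (forall A : set W, A !=set0 -> exists x, A x /\ forall y, A y -> x <= y),
      ~ countable [set: W]
    & forall x : W, countable [set y | y < x]].

(* L(W): the set W + {top}, where [None] plays the role of the top point
   omega_1 and [Some a] the ordinal a < omega_1. *)
Definition Lspace (d : Order.disp_t) (W : orderType d) : Type := option W.

HB.instance Definition _ d (W : orderType d) := Choice.on (Lspace W).

(* Open sets: every point of W is isolated; a set containing the top point is
   open iff it contains a tail ]a, top] (the alternative A = setT only matters
   when W is empty). *)
Definition Lopen d (W : orderType d) (A : set (Lspace W)) : Prop :=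
  A None -> A = setT \/ exists a : W, forall y : W, a < y -> A (Some y).

Lemma Lopen_T d (W : orderType d) : Lopen (@setT (Lspace W)).
Proof. by move=> _; left. Qed.

Lemma Lopen_I d (W : orderType d) : setI_closed (@Lopen d W).
Proof.
move=> A B oA oB [/oA hA /oB hB].
case: hA => [-> | [a ha]]; case: hB => [-> | [b hb]].
- by left; rewrite setIT.
- by right; exists b => y yb; split=> //; apply: hb.
- by right; exists a => y ya; split=> //; apply: ha.
- right; exists (Order.max a b) => y; rewrite gt_max => /andP[ya yb].
  by split; [apply: ha | apply: hb].
Qed.

Lemma Lopen_bigU d (W : orderType d) (I : Type) (f : I -> set (Lspace W)) :
  (forall i, Lopen (f i)) -> Lopen (\bigcup_i f i).
Proof.
move=> of_ [i _ fi]; case: (of_ i fi) => [fT | [a ha]].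
- by left; apply/seteqP; split=> // x _; exists i => //; rewrite fT.
- by right; exists a => y ya; exists i => //; apply: ha.
Qed.

HB.instance Definition _ d (W : orderType d) :=
  isOpenTopological.Build (Lspace W) (@Lopen_T d W) (@Lopen_I d W)
    (@Lopen_bigU d W).

Definition P_space (X : topologicalType) : Prop :=
  forall U : nat -> set X, (forall n, open (U n)) -> open (\bigcap_n U n).

Definition sigma_compact (S : topologicalType) : Prop :=
  exists K : nat -> set S, (forall n, compact (K n)) /\ \bigcup_n K n = setT.

Definition homeomorphism_onto (X Y : topologicalType) (f : X -> Y) (F : set Y)
  : Prop :=
  [/\ injective f, f @` setT = F, continuous f
    & forall U : set X, open U -> exists V : set Y, open V /\ f @` U = F `&` V].

Definition Frolik (X : topologicalType) : Prop :=
  exists (S : nat -> topologicalType) (F : set (prod_topology S)),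
    [/\ forall n, sigma_compact (S n), closed F
      & exists f : X -> prod_topology S, homeomorphism_onto f F].

From HB Require Import structures.
From mathcomp Require Import all_boot all_order.
From mathcomp Require Import boolp classical_sets functions cardinality.
From mathcomp Require Import topology discrete_topology.

(* The heart of the file is a criterion for not being Frolik (not_Frolik):
   a space X containing an uncountable set A such that no injective sequence
   of points of A accumulates at any point of X.  Given an embedding f of X
   onto a closed F in a product of sigma-compact spaces S_n = U_m K n m, a
   Koenig-style argument (uncountable_branch) picks indices phi i such that,
   for every n, uncountably many x in A satisfy f x i \in K i (phi i) for all
   i < n; we then pick distinct such points x_k for n = k
   (uncountable_injective_choice).  Along an ultrafilter refining the cofinite
   filter, each coordinate of f x_k eventually lies in a compact set, so f x_k
   converges in the product (prod_ultra_cvg); F is closed and f an embedding,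
   so x_k converges in X (closed_embedding_cvg), which the hypothesis forbids.

   L(omega_1) meets the criterion with A = omega_1: countable subsets of
   omega_1 are bounded, so an injective sequence of ordinals misses a tail
   neighbourhood of the top point, and every ordinal is isolated.  The same
   boundedness shows that L(omega_1) is a P-space.  The existential statement
   is witnessed by the discrete space on the subsets of nat, which satisfies
   the criterion for the same reasons. *)

Unset Printing Implicit Defensive.
Local Open Scope classical_set_scope.
Import Order.TTheory.

Lemma prod_topology_cvg (I : eqType) (S : I -> topologicalType)
    (G : set_system (prod_topology S)) (w : prod_topology S) : Filter G ->
  (forall i, (fun y : prod_topology S => y i) @ G --> w i) -> G --> w.
Proof.
move=> FG cvg_i; apply/cvg_sup => i; apply/cvg_image => //.
  by apply/seteqP; split => // z _; exists (@dfwith _ _ w i z); rewrite ?dfwith_in.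
move=> B /cvg_i GB; exists ((fun y : prod_topology S => y i) @^-1` B) => //.
apply/seteqP; split => [z [y By <-] //| z Bz].
by exists (@dfwith _ _ w i z); rewrite /= dfwith_in.
Qed.

Lemma ultra_cvg_compact (T : Type) (X : topologicalType) (G : set_system T)
    (g : T -> X) (K : set X) :
  UltraFilter G -> compact K -> G (g @^-1` K) -> exists q : X, g @ G --> q.
Proof.
move=> UG cK GK; have [q [_ clq]] := cK (g @ G) _ GK.
exists q => B qB; case: (in_ultra_setVsetC (g @^-1` B) UG) => // GnB.
by have [z []] := clq (~` B) B GnB qB.
Qed.

Lemma prod_ultra_cvg (I : eqType) (S : I -> topologicalType)
    (K : forall i, set (S i)) (T : Type) (G : set_system T)
    (y : T -> prod_topology S) :
  UltraFilter G -> (forall i, compact (K i)) ->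
  (forall i, G [set t | K i (y t i)]) -> exists w : prod_topology S, y @ G --> w.
Proof.
move=> UG cK GK.
have lim_i i : exists q : S i, (fun t => y t i) @ G --> q.
  exact: ultra_cvg_compact (cK i) (GK i).
exists (fun i => projT1 (cid (lim_i i))).
by apply: prod_topology_cvg => i; exact: (projT2 (cid (lim_i i))).
Qed.

(* A homeomorphism onto a closed set reflects convergence of proper filters:
   the limit of the image lies in the image, and pulling back its
   neighbourhoods gives neighbourhoods of its preimage. *)
Lemma closed_embedding_cvg (X Y : topologicalType) (f : X -> Y) (F : set Y)
    (G : set_system X) (w : Y) :
  ProperFilter G -> homeomorphism_onto f F -> closed F ->
  f @ G --> w -> exists p : X, G --> p.
Proof.
move=> PG [f_inj f_im _ f_open] cF fGw.
have : F w.
  apply: (@closed_cvg _ _ G _ f F cF _ w fGw).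
  by apply: nearW => x; rewrite -f_im; exists x.
rewrite -f_im => -[p _ fpw].
exists p => B; rewrite nbhsE => -[U [oU Up] UB].
have [V [oV]] := f_open U oU; rewrite meetEset => fUV.
have GV : G (f @^-1` V).
  apply: fGw; apply: open_nbhs_nbhs; split => //.
  by have [] : (F `&` V) w by rewrite -fUV -fpw; exists p.
apply: filterS GV => x Vfx; apply: UB.
have : (f @` U) (f x) by rewrite fUV; split => //; rewrite -f_im; exists x.
by case=> u Uu /f_inj <-.
Qed.

Lemma uncountable_nonempty {T : Type} {A : set T} : ~ countable A -> A !=set0.
Proof.
by move=> uA; apply/set0P/negP => /eqP A0; apply: uA; rewrite A0 countable0.
Qed.

(* Koenig-style branch through countably many countable covers: at level n,
   keep the first piece P n m whose intersection with the current set is still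
   uncountable. *)
Section Branch.
Variables (T : Type) (A : set T) (P : nat -> nat -> set T).
Hypothesis P_cover : forall n, \bigcup_m P n m = setT.
Hypothesis A_uncountable : ~ countable A.

Definition next_index (n : nat) (C : set T) : nat :=
  xget 0%N [set m | ~ countable (C `&` P n m)].

Fixpoint branch (n : nat) : set T :=
  if n is n'.+1 then branch n' `&` P n' (next_index n' (branch n')) else A.

Definition branch_index (n : nat) : nat := next_index n (branch n).

(* An uncountable set is the countable union of its traces on P n _, so one of
   them is uncountable. *)
Lemma branch_uncountable n : ~ countable (branch n).
Proof.
elim: n => [//|n IH] /=.
suff m_ok : exists m, ~ countable (branch n `&` P n m) by exact: xgetPex m_ok.
apply: contrapT => all_countable; apply: IH.
rewrite -[branch n]setIT -(P_cover n) setI_bigcupr.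
apply: bigcup_countable => // m _; apply: contrapT => Bm.
by apply: all_countable; exists m.
Qed.

Lemma branch_sub n :
  branch n `<=` A `&` [set x | forall i, (i < n)%N -> P i (branch_index i) x].
Proof.
elim: n => [x Ax | n IH x [/IH [Ax Bx] Px]]; split=> // i.
by rewrite ltnS leq_eqVlt => /orP[/eqP -> //|]; exact: Bx.
Qed.

End Branch.

Lemma uncountable_branch {T : Type} {A : set T} {P : nat -> nat -> set T} :
  ~ countable A -> (forall n, \bigcup_m P n m = setT) ->
  exists phi : nat -> nat,
    forall n, ~ countable (A `&` [set x | forall i, (i < n)%N -> P i (phi i) x]).
Proof.
move=> uA P_cover; exists (@branch_index T A P) => n Bn.
apply: (@branch_uncountable T A P P_cover uA n).
exact: sub_countable (subset_card_le (@branch_sub T A P n)) Bn.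
Qed.

(* From a sequence of uncountable sets one can pick a point in each, all
   distinct: at step n avoid the finitely many points taken so far. *)
Section FreshChoice.
Variables (T : choiceType) (C : nat -> set T) (x0 : T).
Hypothesis C_uncountable : forall k, ~ countable (C k).

Fixpoint taken (n : nat) : set T :=
  if n is n'.+1 then taken n' `|` [set xget x0 (C n' `\` taken n')] else set0.

Definition fresh (n : nat) : T := xget x0 (C n `\` taken n).

Lemma taken_finite n : finite_set (taken n).
Proof.
elim: n => [|n IH]; first exact: finite_set0.
by rewrite /= finite_setU; split; [exact: IH | exact: finite_set1].
Qed.

Lemma fresh_spec n : C n (fresh n) /\ ~ taken n (fresh n).
Proof.
suff avail : exists x, (C n `\` taken n) x by exact: (xgetPex x0 avail).
apply: contrapT => none; apply: (C_uncountable n); apply: finite_set_countable.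
apply: (sub_finite_set _ (taken_finite n)) => x Cx.
by apply: contrapT => nx; apply: none; exists x.
Qed.

Lemma taken_fresh j k : (j < k)%N -> taken k (fresh j).
Proof.
elim: k => // k IH; rewrite ltnS leq_eqVlt => /orP[/eqP -> | jk].
  by right.
by left; exact: IH.
Qed.

Lemma fresh_injective : injective fresh.
Proof.
have lt_neq j k : (j < k)%N -> fresh j <> fresh k.
  by move=> jk e; apply: (fresh_spec k).2; rewrite -e; exact: taken_fresh.
move=> j k e; case: (ltngtP j k) => // [jk|kj].
  by case: (lt_neq _ _ jk e).
by case: (lt_neq _ _ kj (esym e)).
Qed.

End FreshChoice.

Lemma uncountable_injective_choice {T : choiceType} {C : nat -> set T} :
  (forall k, ~ countable (C k)) ->
  exists x : nat -> T, injective x /\ forall k, C k (x k).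
Proof.
move=> C_unc; have [x0 _] := uncountable_nonempty (C_unc 0%N).
exists (@fresh T C x0); split; first exact: fresh_injective.
by move=> k; exact: (@fresh_spec T C x0 C_unc k).1.
Qed.

Definition no_sequential_accumulation {X : topologicalType} (A : set X) : Prop :=
  forall x : nat -> X, injective x -> (forall k, A (x k)) ->
  forall p : X, exists U : set X, [/\ open U, U p & \forall k \near \oo, ~ U (x k)].

Theorem not_Frolik {X : topologicalType} {A : set X} :
  ~ countable A -> no_sequential_accumulation A -> ~ Frolik X.
Proof.
move=> uA noacc [S [F [S_sc cF [f f_emb]]]].
have [K [cK K_cover]] : exists K : forall n, nat -> set (S n),
    (forall n m, compact (K n m)) /\ (forall n, \bigcup_m K n m = setT).
  exists (fun n => projT1 (cid (S_sc n))).
  by split=> n; have [] := projT2 (cid (S_sc n)).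
pose P i m := [set x : X | K i m (f x i)].
have P_cover i : \bigcup_m P i m = setT.
  apply/seteqP; split => // x _.
  have [m _ Km] : (\bigcup_m K i m) (f x i) by rewrite K_cover.
  by exists m.
have [phi phi_unc] := uncountable_branch uA P_cover.
have [x [x_inj xC]] := uncountable_injective_choice phi_unc.
have [G [UG eventually_G]] := @ultraFilterLemma nat \oo _.
have [w fxw] : exists w : prod_topology S, (f \o x) @ G --> w.
  apply: (@prod_ultra_cvg _ S (fun i => K i (phi i))) => // i.
  by apply: eventually_G; exists i.+1 => // k /= ik; exact: (xC k).2.
have [p xp] := @closed_embedding_cvg _ _ f F (x @ G) w _ f_emb cF fxw.
have [U [oU Up never]] := noacc x x_inj (fun k => (xC k).1) p.
have : G ([set k | U (x k)] `&` [set k | ~ U (x k)]).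
  by apply: filterI; [apply: xp; exact: open_nbhs_nbhs | exact: eventually_G].
by move/filter_ex => [k []].
Qed.

Lemma injective_eventually_neq (T : Type) (x : nat -> T) (p : T) :
  injective x -> \forall k \near \oo, x k <> p.
Proof.
move=> x_inj; have [[k xk]|none] := pselect (exists k, x k = p).
  exists k.+1 => // j /= kj xj; have jk : j = k by apply: x_inj; rewrite xj xk.
  by move: kj; rewrite jk ltnn.
by apply: nearW => k xk; apply: none; exists k.
Qed.

Local Open Scope order_scope.

(* omega_1 has uncountable cofinality: every sequence is bounded, since
   otherwise omega_1 would be a countable union of countable initial
   segments. *)
Lemma omega1_countable_bounded {d} {W : orderType d} : is_omega1 W ->
  forall a : nat -> W, exists b : W, forall n, a n <= b.
Proof.
move=> [_ uW cW] a; apply: contrapT => unbounded; apply: uW.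
have -> : [set: W] = \bigcup_(n in setT) [set y | y < a n].
  apply/seteqP; split => // y _; apply: contrapT => ny; apply: unbounded.
  by exists y => n; rewrite leNgt; apply/negP => lt; apply: ny; exists n.
by apply: bigcup_countable => // n _; exact: cW.
Qed.

(* Countably many tails ]a_n, top] contain the tail above a bound of the a_n. *)
Lemma Lspace_P_space d (W : orderType d) : is_omega1 W -> P_space (Lspace W).
Proof.
move=> hW U oU; change (Lopen (\bigcap_n U n)) => top_in.
have [w0 _] : [set: W] !=set0 by case: hW => _ uW _; exact: uncountable_nonempty.
have tail n : exists a : W, forall y : W, a < y -> U n (Some y).
  by case: (oU n (top_in n I)) => [-> | //]; exists w0.
have [b hb] := omega1_countable_bounded hW (fun n => projT1 (cid (tail n))).
right; exists b => y by_ n _.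
by apply: (projT2 (cid (tail n))); exact: le_lt_trans (hb n) by_.
Qed.

Lemma Lspace_ordinals_uncountable {d} {W : orderType d} :
  is_omega1 W -> ~ countable (range (@Some W) : set (Lspace W)).
Proof.
move=> [_ uW _] /countable_injP [g g_inj]; apply: uW.
apply/countable_injP; exists (fun w => g (Some w)) => a b _ _ gab.
suff : Some a = Some b by case.
by apply: g_inj => //; apply: mem_set; [exists a | exists b].
Qed.

(* Ordinals are isolated; an injective sequence of ordinals is bounded by some
   b, hence avoids the neighbourhood ]b, top] of the top point. *)
Lemma Lspace_no_sequential_accumulation {d} {W : orderType d} :
  is_omega1 W -> no_sequential_accumulation (range (@Some W) : set (Lspace W)).
Proof.
move=> hW x x_inj x_ord [a|].
  by exists [set Some a]; split => //; exact: injective_eventually_neq.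
have [w0 _ _] := x_ord 0%N.
have [b hb] := omega1_countable_bounded hW (fun k => odflt w0 (x k)).
exists [set o : Lspace W | if o is Some y then b < y else True]; split => //.
  by move=> _; right; exists b.
apply: nearW => k; have := hb k; have [y _ <-] := x_ord k => /= yb.
by apply/negP; rewrite -leNgt.
Qed.

Local Close Scope order_scope.

Lemma Lspace_not_Frolik d (W : orderType d) : is_omega1 W -> ~ Frolik (Lspace W).
Proof.
move=> hW; apply: (not_Frolik (Lspace_ordinals_uncountable hW)).
exact: Lspace_no_sequential_accumulation.
Qed.

Lemma subsets_of_nat_uncountable : ~ countable [set: set nat].
Proof.
move/countable_injP => [g g_inj].
pose D : set nat := [set n | forall B, g B = n -> ~ B n].
have notD : ~ D (g D) by move=> DgD; apply: (DgD D).
by apply: (notD) => B /g_inj gBD; rewrite gBD ?in_setT.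
Qed.

Lemma discrete_P_space (X : discreteTopologicalType) : P_space X.
Proof. by move=> U _; exact: discrete_open. Qed.

Lemma discrete_no_sequential_accumulation (X : discreteTopologicalType)
    (A : set X) : no_sequential_accumulation A.
Proof.
move=> x x_inj _ p; exists [set p]; split => //; first exact: discrete_open.
exact: injective_eventually_neq.
Qed.

Theorem mainTheorem7 :
  (forall (d : Order.disp_t) (W : orderType d), is_omega1 W ->
     P_space (Lspace W) /\ ~ Frolik (Lspace W)) /\
  (exists X : topologicalType, P_space X /\ ~ Frolik X).
Proof.
split=> [d W hW | ].
  by split; [exact: Lspace_P_space | exact: Lspace_not_Frolik].
exists (discrete_topology (set nat)); split; first exact: discrete_P_space.
apply: (@not_Frolik (discrete_topology (set nat)) setT).
  exact: subsets_of_nat_uncountable.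
exact: discrete_no_sequential_accumulation.
Qed.
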